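(* Let $d\ge2$ and $A\in\mathbb{N}$. Let $\{(G_\nu,S_\nu,|\cdot|_\nu)\}_{\nu\in\mathbb{N}}$ be a non-$\ell_1$-expanding similar family of groups of automorphisms of $T_d$ such that $S_\nu\subseteq\mathcal{I}_\infty^\nu$ and $|S_\nu|\le A$ for every $\nu\in\mathbb{N}$, and let $\Omega_\nu(n)$ be the sphere of radius $n$ in $G_\nu$ with respect to the pseudometric induced by $|\cdot|_\nu$. If there exists a subexponential function $\delta\colon\mathbb{N}\to\mathbb{N}$ with $\ln(\delta)$ concave such that for infinitely many $\nu\in\mathbb{N}$ one has $|\mathcal{I}_\infty^\nu\cap\Omega_\nu(n)|\le\delta(n)$ for all $n\in\mathbb{N}$, then $G_\nu$ is of subexponential growth for every $\nu\in\mathbb{N}$.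
   Context: $T_d$ is the $d$-regular rooted tree (vertices: finite words over $\{1,\dots,d\}$). $\mathrm{Sym}(d)$ acts by rooted automorphisms $\tau(xw)=\tau(x)w$, and every $g\in\mathrm{Aut}(T_d)$ is uniquely written $g=(g_1,\dots,g_d)\tau$ with $\tau\in\mathrm{Sym}(d)$ and $g_i$ the restriction of $g\tau^{-1}$ to the subtree at vertex $i$. A pseudolength on a finite symmetric generating set $S$ of $G$ is a map $S\to\{0,1\}$; the associated word pseudonorm is $|g|=\min\{\sum_i|s_i| : g=s_1\cdots s_k, s_i\in S\}$, with pseudometric $d(g,h)=|g^{-1}h|$; it is proper if the subgroup generated by length-$0$ generators is finite. A non-$\ell_1$-expanding similar family is a family $\{(G_\nu,S_\nu,|\cdot|_\nu)\}_{\nu\in\mathbb{N}}$ where each $G_\nu\le\mathrm{Aut}(T_d)$ acts transitively on each level of $T_d$, is generated by the finite symmetric set $S_\nu$ and carries a proper word pseudonorm $|\cdot|_\nu$, such that every $g\in G_\nu$ is $g=(g_1,\dots,g_d)\tau$ with $g_i\in G_{\nu+1}$, $\tau\in\mathrm{Sym}(d)$ and $\sum_{i=1}^d|g_i|_{\nu+1}\le|g|_\nu$. Incompressible elements: $\mathcal{I}_0^\nu=G_\nu$; $\mathcal{I}_k^\nu=\{g=(g_1,\dots,g_d)\tau\in G_\nu : g_i\in\mathcal{I}_{k-1}^{\nu+1}, \sum_i|g_i|_{\nu+1}=|g|_\nu\}$; $\mathcal{I}_\infty^\nu=\bigcap_{k\ge1}\mathcal{I}_k^\nu$. For non-decreasing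 $f,g\colon\mathbb{N}\to\mathbb{N}$, $f\lesssim g$ means $f(n)\le g(Cn)$ for some $C\in\mathbb{N}_{>0}$ and all $n\ge1$, $f\sim g$ means both directions; $f$ is subexponential if $f\lesssim e^n$ and $f\not\sim e^n$; a group is of subexponential growth if its growth function (ball sizes) is subexponential. *)

From Stdlib Require List.
From Stdlib Require Import Reals ClassicalEpsilon.
From mathcomp Require Import all_boot.

Set Implicit Arguments.
Unset Strict Implicit.
Unset Printing Implicit Defensive.

(* Vertices of T_d: finite words over the alphabet 'I_d = {0,...,d-1}. *)
Definition vert (d : nat) := seq 'I_d.
Definition tfun (d : nat) := vert d -> vert d.

(* g is a rooted automorphism of T_d: a bijection of the vertices that
   preserves the level (word length) and the prefix (ancestor) relation. *)
Definition is_aut (d : nat) (g : tfun d) : Prop :=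
  bijective g /\
  (forall w, size (g w) = size w) /\
  (forall v w, exists u, g (v ++ w) = g v ++ u).

(* Writing g = (g_1,...,g_d) tau, the family
   (section g x)_x is a re-indexing of (g_i)_i by the permutation tau. *)
Definition section (d : nat) (g : tfun d) (x : 'I_d) : tfun d :=
  fun w => behead (g (x :: w)).

Definition prod_word (d : nat) (w : seq (tfun d)) : tfun d :=
  foldr (fun s acc => s \o acc) id w.

Definition word_over (d : nat) (S : seq (tfun d)) (w : seq (tfun d)) : Prop :=
  List.Forall (fun s => List.In s S) w.

Definition in_gen (d : nat) (S : seq (tfun d)) (g : tfun d) : Prop :=
  exists w, word_over S w /\ prod_word w = g.

Definition weight (d : nat) (l : tfun d -> nat) (w : seq (tfun d)) : nat :=
  sumn (map l w).

Definition word_weight (d : nat) (S : seq (tfun d)) (l : tfun d -> nat)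
  (g : tfun d) (m : nat) : Prop :=
  exists w, word_over S w /\ prod_word w = g /\ weight l w = m.

Definition wnorm (d : nat) (S : seq (tfun d)) (l : tfun d -> nat)
  (g : tfun d) : nat :=
  epsilon (inhabits 0%nat)
    (fun n => word_weight S l g n /\
              (forall m, word_weight S l g m -> (n <= m)%N)).

Definition has_card (T : Type) (P : T -> Prop) (n : nat) : Prop :=
  exists l : list T, List.NoDup l /\ length l = n /\
                     (forall x, List.In x l <-> P x).

Definition finite_pred (T : Type) (P : T -> Prop) : Prop :=
  exists l : list T, forall x, P x -> List.In x l.

Definition card_le (T : Type) (P : T -> Prop) (n : nat) : Prop :=
  exists l : list T, (length l <= n)%N /\ (forall x, P x -> List.In x l).

(* The data: S nu is the finite symmetric generating set of G_nu := <S nu>,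
   l nu is the pseudolength on S nu. *)

Definition inG (d : nat) (S : nat -> seq (tfun d)) (nu : nat) (g : tfun d) :=
  in_gen (S nu) g.

Definition norm (d : nat) (S : nat -> seq (tfun d)) (l : nat -> tfun d -> nat)
  (nu : nat) (g : tfun d) : nat := wnorm (S nu) (l nu) g.

Definition non_l1_expanding_similar_family (d : nat)
  (S : nat -> seq (tfun d)) (l : nat -> tfun d -> nat) : Prop :=
  forall nu : nat,
    (forall s, List.In s (S nu) -> is_aut s) /\
    (forall s, List.In s (S nu) ->
       exists t, List.In t (S nu) /\ (forall w, t (s w) = w)) /\
    (forall v w : vert d, size v = size w ->
       exists g, inG S nu g /\ g v = w) /\
    (forall s, List.In s (S nu) -> (l nu s <= 1)%N) /\
    (* the word pseudonorm is proper *)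
    finite_pred (in_gen [seq s <- S nu | l nu s == 0%N]) /\
    (forall g, inG S nu g ->
       (forall x, inG S nu.+1 (section g x)) /\
       (\sum_(x < d) norm S l nu.+1 (section g x) <= norm S l nu g)%N).

Fixpoint incomp (d : nat) (S : nat -> seq (tfun d)) (l : nat -> tfun d -> nat)
  (k nu : nat) (g : tfun d) {struct k} : Prop :=
  match k with
  | 0 => inG S nu g
  | k'.+1 => inG S nu g /\
             (forall x, incomp S l k' nu.+1 (section g x)) /\
             (\sum_(x < d) norm S l nu.+1 (section g x))%N = norm S l nu g
  end.

Definition incomp_inf (d : nat) (S : nat -> seq (tfun d))
  (l : nat -> tfun d -> nat) (nu : nat) (g : tfun d) : Prop :=
  forall k, (1 <= k)%N -> incomp S l k nu g.

Definition sphere (d : nat) (S : nat -> seq (tfun d))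
  (l : nat -> tfun d -> nat) (nu n : nat) (g : tfun d) : Prop :=
  inG S nu g /\ norm S l nu g = n.

Definition nondecreasing (f : nat -> nat) : Prop :=
  forall m n, (m <= n)%N -> (f m <= f n)%N.

Definition lesssim (f g : nat -> R) : Prop :=
  exists C : nat, (0 < C)%N /\ forall n : nat, (1 <= n)%N -> Rle (f n) (g (C * n)%N).

Definition expn_R : nat -> R := fun n => exp (INR n).

(* Subexponential: f non-decreasing, f <~ e^n and not f ~ e^n
   (given f <~ e^n, f ~ e^n amounts to e^n <~ f). *)
Definition subexponential (f : nat -> nat) : Prop :=
  nondecreasing f /\
  lesssim (fun n => INR (f n)) expn_R /\
  ~ (lesssim (fun n => INR (f n)) expn_R /\ lesssim expn_R (fun n => INR (f n))).

Definition word_ball (d : nat) (S : seq (tfun d)) (n : nat) (g : tfun d) : Prop :=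
  exists w, word_over S w /\ (size w <= n)%N /\ prod_word w = g.

Definition subexponential_growth (d : nat) (S : seq (tfun d)) : Prop :=
  exists f : nat -> nat,
    (forall n, has_card (word_ball S n) (f n)) /\ subexponential f.

(* ln(delta) is concave on N (delta positive so that ln delta is defined). *)
Definition ln_concave (delta : nat -> nat) : Prop :=
  (forall n, (0 < delta n)%N) /\
  forall n : nat,
    Rle (Rplus (ln (INR (delta n))) (ln (INR (delta n.+2)))) (Rmult 2 (ln (INR (delta n.+1)))).

(* Say that [G_nu] has rate [x] when its pseudonorm balls of radius [n] have at most
   [K e^(x n)] elements.

   Portraits: [g] in [G_nu] is determined by its action on level [L] of [T_d] and its sections
   there, whose norms in [G_(nu+L)] sum to at most [|g|].  Counting portraits, rate [x] at
   level [nu + L] gives rate [x + eps] at level [nu].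

   Blocks: at a level [nu] where the incompressible spheres are bounded by [delta], cut a word
   of weight [n] into about [n / M] blocks of weight at most [M].  Each element of the finite
   ball of radius [M] is either in [I_inf] or outside [I_L] for one common depth [L], and in the
   latter case its level-[L] sections have total norm smaller than its own.  So either at least
   one block in [p] is compressible, and the portrait count applies with [n] replaced by
   [(1 - 1/(M p)) n], or the word is a sequence of mostly incompressible blocks, of which there
   are only [O(e^(h n / 2))], for a prescribed [h > 0], once [M] and [p] are large, as [delta]
   is subexponential.

   As such levels occur arbitrarily far out, the least rate valid at every level cannot be
   positive, so every [x > 0] is a rate and the word growth is not exponential. *)

From Stdlib Require List.
From Stdlib Require Import Reals Lra Lia ClassicalEpsilon FunctionalExtensionality Classical.
From mathcomp Require Import all_boot zify.

Set Implicit Arguments.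
Unset Strict Implicit.
Unset Printing Implicit Defensive.

Section ExpRates.
Local Open Scope R_scope.

Lemma INR_muln m n : INR (m * n)%N = INR m * INR n.
Proof. exact: mult_INR. Qed.

Lemma INR_addn m n : INR (m + n)%N = INR m + INR n.
Proof. exact: plus_INR. Qed.

Lemma INR_expn m n : INR (m ^ n)%N = INR m ^ n.
Proof. by rewrite -pow_INR; congr INR; elim: n => //= n IH; rewrite expnS IH. Qed.

Lemma INR_leq m n : (m <= n)%N -> INR m <= INR n.
Proof. by move/leP; apply: le_INR. Qed.

Lemma INR_subn m n : (n <= m)%N -> INR (m - n)%N = INR m - INR n.
Proof. by move/leP; apply: minus_INR. Qed.

Lemma exp_le x y : x <= y -> exp x <= exp y.
Proof. by case/Rle_lt_or_eq_dec => [/exp_increasing/Rlt_le|->]; last exact: Rle_refl. Qed.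

Lemma exp_pow a k : exp a ^ k = exp (a * INR k).
Proof.
elim: k => [|k IH]; first by rewrite /= Rmult_0_r exp_0.
rewrite S_INR -tech_pow_Rmult IH -exp_plus; congr exp; ring.
Qed.

Lemma pow_le_exp c a k : 0 <= c -> c <= exp a -> c ^ k <= exp (a * INR k).
Proof. by move=> c0 ca; rewrite -exp_pow; apply: pow_incr. Qed.

Lemma exp_archimed a c : 0 < a -> exists p, (0 < p)%N /\ c <= exp (a * INR p).
Proof.
move=> a0; have [p Hp] := INR_archimed a c a0.
by exists p.+1; split => //; rewrite S_INR; apply: Rle_trans (exp_ineq1_le _); nra.
Qed.

Definition exp_rate_le (f : nat -> R) (x : R) : Prop :=
  exists K, 0 < K /\ forall n, f n <= K * exp (x * INR n).

Lemma exp_rate_le_trans f g x :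
  (forall n, f n <= g n) -> exp_rate_le g x -> exp_rate_le f x.
Proof. by move=> fg [K [K0 HK]]; exists K; split => // n; apply: Rle_trans (HK n). Qed.

Lemma exp_rate_le_mono f x y : x <= y -> exp_rate_le f x -> exp_rate_le f y.
Proof.
move=> xy [K [K0 HK]]; exists K; split => // n; apply: Rle_trans (HK n) _.
apply: Rmult_le_compat_l; first lra.
by apply: exp_le; apply: Rmult_le_compat_r => //; apply: pos_INR.
Qed.

Lemma exp_rate_le_exp x : exp_rate_le (fun n => exp (x * INR n)) x.
Proof. by exists 1; split => [|n]; [lra|rewrite Rmult_1_l; apply: Rle_refl]. Qed.

Lemma exp_rate_le_scale c f x :
  0 <= c -> exp_rate_le f x -> exp_rate_le (fun n => c * f n) x.
Proof.
move=> c0 [K [K0 HK]]; exists ((c + 1) * K); split => [|n]; first nra.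
have := HK n; have := exp_pos (x * INR n); nra.
Qed.

Lemma exp_rate_le_add f g x y : exp_rate_le f x -> exp_rate_le g y ->
  exp_rate_le (fun n => f n + g n) (Rmax x y).
Proof.
move=> /(exp_rate_le_mono (Rmax_l x y)) [K1 [K10 H1]].
move=> /(exp_rate_le_mono (Rmax_r x y)) [K2 [K20 H2]].
by exists (K1 + K2); split => [|n]; [lra|have := H1 n; have := H2 n; lra].
Qed.

Lemma exp_rate_le_mul f g x y : (forall n, 0 <= f n) -> (forall n, 0 <= g n) ->
  exp_rate_le f x -> exp_rate_le g y -> exp_rate_le (fun n => f n * g n) (x + y).
Proof.
move=> f0 g0 [K1 [K10 H1]] [K2 [K20 H2]]; exists (K1 * K2); split => [|n]; first nra.
apply: Rle_trans (Rmult_le_compat _ _ _ _ (f0 n) (g0 n) (H1 n) (H2 n)) _.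
by rewrite Rmult_plus_distr_r exp_plus; apply: Req_le; ring.
Qed.

Lemma exp_rate_le_succ_pow D eps :
  0 < eps -> exp_rate_le (fun n => (INR n + 1) ^ D) eps.
Proof.
move=> eps0; set a := eps / (INR D + 1).
have D0 := pos_INR D.
have a0 : 0 < a by apply: Rdiv_lt_0_compat; lra.
have aD : a * INR D <= eps.
  have -> : eps = a * (INR D + 1) by rewrite /a; field; lra.
  nra.
have m0 : 0 < Rmin 1 a by apply: Rmin_glb_lt; lra.
exists ((/ Rmin 1 a) ^ D); split => [|n]; first by apply: pow_lt; apply: Rinv_0_lt_compat.
have lin : INR n + 1 <= / Rmin 1 a * exp (a * INR n).
  apply: (Rmult_le_reg_l (Rmin 1 a)) => //.
  rewrite -Rmult_assoc Rinv_r; last lra.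
  have := Rmin_l 1 a; have := Rmin_r 1 a; have := pos_INR n.
  have := exp_ineq1_le (a * INR n); nra.
apply: Rle_trans (_ : (/ Rmin 1 a * exp (a * INR n)) ^ D <= _).
  by apply: pow_incr; split => //; have := pos_INR n; lra.
rewrite Rpow_mult_distr exp_pow; apply: Rmult_le_compat_l.
  by apply: pow_le; apply: Rlt_le; apply: Rinv_0_lt_compat.
by apply: exp_le; have := pos_INR n; nra.
Qed.

Lemma not_lesssim_exp_of_exp_rate_le f :
  (forall x, 0 < x -> exp_rate_le f x) -> ~ lesssim expn_R f.
Proof.
move=> rates [C [C0 HC]].
have CR : 0 < INR C by apply: lt_0_INR; apply/ltP.
have [K [K0 HK]] := rates (/ (2 * INR C)) (ltac:(apply: Rinv_0_lt_compat; lra)).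
have [n Hn] := INR_archimed (/ 2) K (ltac:(lra)).
have n1 : (1 <= n)%N by case: n Hn => [|n] //= H; lra.
have := HC n n1; have := HK (C * n)%N; rewrite /expn_R INR_muln.
have -> : / (2 * INR C) * (INR C * INR n) = INR n / 2 by field; lra.
have -> : exp (INR n) = exp (INR n / 2) * exp (INR n / 2) by rewrite -exp_plus; congr exp; field.
have := exp_ineq1_le (INR n / 2); have := exp_pos (INR n / 2); nra.
Qed.

Lemma exp_le_of_not_lesssim f a M0 : ~ lesssim expn_R f -> 0 < a ->
  exists M, (M0 <= M)%N /\ f M <= exp (a * INR M).
Proof.
move=> Hf a0; have [C1 HC1] := INR_archimed a 1 a0.
set C := (C1 + M0).+1.
have [n [n1 Hn]] : exists n, (1 <= n)%N /\ f (C * n)%N < exp (INR n).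
  apply: NNPP => none; apply: Hf; exists C; split => // n n1.
  by apply: Rnot_lt_le => Hlt; apply: none; exists n.
exists (C * n)%N; split; first by rewrite -[M0]muln1; apply: leq_mul => //; lia.
apply: Rlt_le; apply: Rlt_le_trans Hn _; apply: exp_le.
rewrite INR_muln /C S_INR INR_addn.
have : 1 <= a * (INR C1 + INR M0 + 1) by have := pos_INR M0; nra.
have := INR_leq n1; rewrite /=; nra.
Qed.

Lemma linear_le_exp_eventually a : 0 < a ->
  exists M0, forall M, (M0 <= M)%N -> INR (4 * M.+1) <= exp (a * INR M).
Proof.
move=> a0; have [M0 HM0] := INR_archimed (a * a) 32 (ltac:(nra)).
exists M0.+1 => M HM; have M1 := INR_leq (leq_trans (ltn0Sn M0) HM).
have MM0 : INR M0 <= INR M by apply: INR_leq; apply: ltnW.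
rewrite /= in M1; rewrite INR_muln (_ : INR 4 = 4) ?S_INR; last by rewrite /=; ring.
have -> : a * INR M = a * INR M / 2 + a * INR M / 2 by field.
rewrite exp_plus.
have big : 8 * INR M <= (a * INR M / 2) * (a * INR M / 2).
  have : 32 <= a * a * INR M by nra.
  nra.
set y := a * INR M / 2 in big *.
have y0 : 0 <= y by rewrite /y; nra.
have ey := exp_ineq1_le y.
have : (1 + y) * (1 + y) <= exp y * exp y by apply: Rmult_le_compat; lra.
nra.
Qed.

Lemma scale_le_exp_of_not_lesssim (f : nat -> nat) h :
  0 < h -> ~ lesssim expn_R (fun n => INR (f n)) ->
  exists M, (0 < M)%N /\ INR (4 * M.+1 * f M) <= exp (h * INR M / 4).
Proof.
move=> h0 fslow; have [M0 lin] := linear_le_exp_eventually (a := 3 * h / 16) ltac:(lra).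
have [M [MM0 dM]] := exp_le_of_not_lesssim M0.+1 fslow (ltac:(lra) : 0 < h / 16).
exists M; split; first exact: leq_trans MM0.
rewrite INR_muln (_ : h * INR M / 4 = 3 * h / 16 * INR M + h / 16 * INR M); last by field.
rewrite exp_plus; apply: Rmult_le_compat; [exact: pos_INR|exact: pos_INR| |exact: dM].
exact/lin/ltnW.
Qed.

End ExpRates.

Section RealBounds.
Local Open Scope R_scope.

Lemma sub_div_div_le n M p : (0 < M)%N -> (0 < p)%N ->
  INR (n - (n %/ M).+1 %/ p) <= INR n * (1 - / (INR M * INR p)) + 1.
Proof.
move=> M0 p0; set j := ((n %/ M).+1 %/ p)%N.
have n_lt : (n < j.+1 * p * M)%N.
  apply: leq_trans (ltn_ceil n M0) _; rewrite leq_mul2r; apply/orP; right.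
  exact: ltnW (ltn_ceil _ p0).
have P1 : 1 <= INR M * INR p.
  by have := INR_leq M0; have := INR_leq p0; rewrite /=; nra.
set P := INR M * INR p in P1 *.
have nP : INR n * / P <= INR j + 1.
  have := INR_leq (ltnW n_lt); rewrite !INR_muln S_INR -/P Rmult_assoc => nle.
  apply: (Rmult_le_reg_r P); first lra.
  rewrite Rmult_assoc Rinv_l; last by apply: Rgt_not_eq; lra.
  by rewrite /P; lra.
have iP : / P <= 1 by rewrite -Rinv_1; apply: Rinv_le_contravar; lra.
have n0 := pos_INR n.
case: (leqP j n) => jn; first by rewrite INR_subn //; lra.
rewrite (_ : n - j = 0)%N /=; last by apply/eqP; rewrite subn_eq0 ltnW.
have : 0 <= INR n * (1 - / P) by apply: Rmult_le_pos; lra.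
lra.
Qed.

Lemma pow_mul_le_exp (a b q j M p n : nat) h : 0 < h ->
  (q * M <= n)%N -> (j * p <= q.+1)%N ->
  INR a <= exp (h * INR M / 4) -> INR b <= exp (h * INR p / 4) ->
  INR (a ^ q.+1 * b ^ (M * j)) <= exp (h * INR M / 2) * exp (h / 2 * INR n).
Proof.
move=> h0 qMn jpq aM bp; rewrite INR_muln !INR_expn -exp_plus.
have jpM : (M * j * p <= M * q.+1)%N by rewrite -mulnA leq_mul2l jpq orbT.
have qM : (M * q.+1 <= n + M)%N by rewrite mulnS addnC mulnC leq_add2r.
move: (INR_leq jpM) (INR_leq qM); rewrite !INR_muln INR_addn => {}jpM {}qM.
apply: Rle_trans (Rmult_le_compat _ _ _ _ (pow_le _ _ (pos_INR _)) (pow_le _ _ (pos_INR _))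
  (pow_le_exp _ (pos_INR a) aM) (pow_le_exp _ (pos_INR b) bp)) _.
rewrite -exp_plus INR_muln; apply: exp_le.
have h4 : 0 <= h / 4 by lra.
have := Rmult_le_compat_l _ _ _ h4 jpM; have := Rmult_le_compat_l _ _ _ h4 qM.
rewrite /Rdiv; nra.
Qed.

End RealBounds.

Lemma size_length (X : Type) (s : seq X) : size s = length s.
Proof. by elim: s => //= x s ->. Qed.

Lemma ex_least (P : nat -> Prop) m0 : P m0 -> exists n, P n /\ forall m, P m -> (n <= m)%N.
Proof.
elim: m0 {-2}m0 (leqnn m0) => [|k IH] m0 m0k Pm0.
  by exists m0; split => // m _; move: m0k; rewrite leqn0 => /eqP ->.
case: (classic (exists m, P m /\ (m < m0)%N)) => [[m [Pm mm0]]|none].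
  by apply: (IH m) => //; rewrite -ltnS (leq_trans mm0 m0k).
exists m0; split => // m Pm; rewrite leqNgt; apply/negP => mm0; apply: none; by exists m.
Qed.

Lemma sum_eq_le_pointwise n (a c : 'I_n -> nat) :
  (forall i, a i <= c i)%N -> (\sum_(i < n) c i <= \sum_(i < n) a i)%N -> forall i, a i = c i.
Proof.
move=> ac sca i; apply/eqP; rewrite eqn_leq ac /=.
have E : (\sum_(i < n) c i = \sum_(i < n) (c i - a i) + \sum_(i < n) a i)%N.
  by rewrite -big_split; apply: eq_bigr => j _ /=; rewrite subnK.
have : (\sum_(i < n) (c i - a i) == 0)%N.
  by rewrite -(eqn_add2r (\sum_(i < n) a i)) add0n -E eqn_leq sca leq_sum.
by rewrite sum_nat_eq0 => /forallP /(_ i) /eqP /eqP; rewrite subn_eq0.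
Qed.

Lemma leq_expn2r m n e : (m <= n)%N -> (m ^ e <= n ^ e)%N.
Proof. by move=> mn; elim: e => // e IH; rewrite !expnS leq_mul. Qed.

Lemma InP (X : eqType) (x : X) s : reflect (List.In x s) (x \in s).
Proof.
elim: s => [|y s IH] /=; first by constructor.
rewrite in_cons; apply: (iffP orP) => [[/eqP ->|/IH]|[->|/IH]]; by [left|right|rewrite eqxx].
Qed.

Lemma In_flatten (X : Type) (x : X) s ss :
  List.In s ss -> List.In x s -> List.In x (flatten ss).
Proof. by move=> sss xs; apply/List.in_concat; exists s. Qed.

Lemma In_allpairs (A B C : Type) (f : A -> B -> C) x y s t :
  List.In x s -> List.In y t -> List.In (f x y) [seq f a b | a <- s, b <- t].
Proof.
move=> xs yt; apply: (In_flatten (s := [seq f x b | b <- t])); last exact: List.in_map.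
exact: (List.in_map (fun a => [seq f a b | b <- t])).
Qed.

Lemma In_allpairs_inv (A B C : Type) (f : A -> B -> C) z s t :
  List.In z [seq f a b | a <- s, b <- t] ->
  exists x y, [/\ List.In x s, List.In y t & z = f x y].
Proof.
case/List.in_concat => _ [/List.in_map_iff [x [<- xs]] /List.in_map_iff [y [<- yt]]].
by exists x, y.
Qed.

Section Enumeration.
Variable X : Type.

Definition covers (P : X -> Prop) (s : seq X) : Prop := forall x, P x -> List.In x s.

Lemma covers_cardinal P s : covers P s -> exists k, has_card P k /\ (k <= size s)%N.
Proof.
elim: s P => [|a s IH] P Ps.
  by exists 0%N; split => //; exists [::]; split; [constructor|split => // x; split => // /Ps].
have Ps' : covers (fun x => P x /\ x <> a) s.
  by move=> x [Px xa]; case: (Ps x Px) => // ax; case: xa.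
have [k [[r [ru [rk rP]]] ks]] := IH _ Ps'.
case: (classic (P a)) => Pa.
  exists k.+1; split; last by rewrite ltnS.
  exists (a :: r); split; first by constructor => // /rP [].
  split; first by rewrite /= rk.
  move=> x; split; first by case=> [<-|/rP []].
  by move=> Px; case: (classic (a = x)) => [|xa]; [left|right; apply/rP; split => // ?; apply: xa].
exists k; split; last exact: leqW.
exists r; split => //; split => // x; split; first by case/rP.
by move=> Px; apply/rP; split => // xa; apply: Pa; rewrite -xa.
Qed.

Lemma has_card_le_size P k s : has_card P k -> covers P s -> (k <= size s)%N.
Proof.
move=> [r [ru [<- rP]]] Ps; apply/leP; rewrite size_length.
exact: List.NoDup_incl_length ru (fun x xr => Ps x (proj1 (rP x) xr)).
Qed.

Fixpoint allseqs (s : seq X) (n : nat) : seq (seq X) :=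
  if n is n'.+1 then [seq x :: r | x <- s, r <- allseqs s n'] else [:: [::]].

Lemma size_allseqs s n : size (allseqs s n) = (size s ^ n)%N.
Proof. by elim: n => //= n IH; rewrite size_allpairs IH expnS. Qed.

Lemma In_allseqs s r :
  (forall x, List.In x r -> List.In x s) -> List.In r (allseqs s (size r)).
Proof.
elim: r => [|x r IH] rs /=; first by left.
by apply: (In_allpairs cons); [apply: rs; left|apply: IH => y yr; apply: rs; right].
Qed.

(** [tuples_le Ls n t] lists the [x_1 :: ... :: x_n] with [x_i] in [Ls s_i]
    and [s_1 + ... + s_n <= t]. *)
Fixpoint tuples_le (Ls : nat -> seq X) (n t : nat) : seq (seq X) :=
  if n is n'.+1 then
    flatten [seq [seq x :: r | x <- Ls s, r <- tuples_le Ls n' (t - s)] | s <- iota 0 t.+1]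
  else [:: [::]].

Lemma tuples_leS Ls n t : tuples_le Ls n.+1 t =
  flatten [seq [seq x :: r | x <- Ls s, r <- tuples_le Ls n (t - s)] | s <- iota 0 t.+1].
Proof. by []. Qed.

Lemma In_tuples_le (wt : X -> nat) (P : X -> Prop) (Ls : nat -> seq X) :
  (forall s, covers (fun x => P x /\ (wt x <= s)%N) (Ls s)) ->
  forall r t, List.Forall P r -> (sumn (map wt r) <= t)%N ->
  List.In r (tuples_le Ls (size r) t).
Proof.
move=> Lcov; elim => [|x r IH] t Pr rt; first by left.
inversion Pr as [|? ? Px Pr']; subst; rewrite /= in rt.
change (size (x :: r)) with (size r).+1; rewrite tuples_leS.
apply: (In_flatten (s := [seq y :: r' | y <- Ls (wt x), r' <- tuples_le Ls (size r) (t - wt x)])).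
  apply: (List.in_map (fun s => [seq y :: r' | y <- Ls s, r' <- tuples_le Ls (size r) (t - s)])
    (iota 0 t.+1) (wt x)).
  by apply/InP; rewrite mem_iota; lia.
apply: (In_allpairs cons); first by apply: Lcov.
by apply: IH => //; lia.
Qed.

Fixpoint mixed_seqs (LI LB : seq X) (q j : nat) : seq (seq X) :=
  if q is q'.+1 then
    [seq x :: r | x <- LI, r <- mixed_seqs LI LB q' j] ++
    (if j is j'.+1 then [seq x :: r | x <- LB, r <- mixed_seqs LI LB q' j'] else [::])
  else [:: [::]].

Lemma In_mixed_seqsI LI LB q j x r : List.In x LI ->
  List.In r (mixed_seqs LI LB q j) -> List.In (x :: r) (mixed_seqs LI LB q.+1 j).
Proof. by move=> xI rq; apply: List.in_or_app; left; apply: (In_allpairs cons). Qed.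

Lemma In_mixed_seqsB LI LB q j x r : List.In x LB ->
  List.In r (mixed_seqs LI LB q j) -> List.In (x :: r) (mixed_seqs LI LB q.+1 j.+1).
Proof. by move=> xB rq; apply: List.in_or_app; right; apply: (In_allpairs cons). Qed.

Lemma mixed_seqs_mono LI LB q j j' r : (j <= j')%N ->
  List.In r (mixed_seqs LI LB q j) -> List.In r (mixed_seqs LI LB q j').
Proof.
elim: q j j' r => [|q IH] j j' r jj' //= rq; case: (List.in_app_or _ _ _ rq) => {rq}.
  move=> rI; have [x [r' [xI r'q ->]]] := In_allpairs_inv rI.
  by apply: In_mixed_seqsI => //; apply: IH r'q.
case: j jj' => [|j] // jj'; case: j' jj' => [|j'] // jj'.
move=> rB; have [x [r' [xB r'q ->]]] := In_allpairs_inv rB.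
by apply: In_mixed_seqsB => //; apply: IH r'q.
Qed.

Lemma size_mixed_seqs LI LB q j :
  (size (mixed_seqs LI LB q j) <= 2 ^ q * (size LI).+1 ^ q * (size LB).+1 ^ j)%N.
Proof.
elim: q j => [|q IH] j /=; first by rewrite muln1 mul1n expn_gt0.
rewrite size_cat size_allpairs.
have tail : (size (if j is j'.+1 then [seq x :: r | x <- LB, r <- mixed_seqs LI LB q j']
                   else [::]) <= 2 ^ q * (size LI).+1 ^ q.+1 * (size LB).+1 ^ j)%N.
  by case: j => [|j] //; rewrite size_allpairs; have := IH j; rewrite !expnS; nia.
by have := IH j; move: tail; rewrite !expnS; nia.
Qed.

End Enumeration.

Section TupleCount.
Local Open Scope R_scope.

Lemma INR_sumn_le (f : nat -> nat) (s : seq nat) c :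
  (forall i, i \in s -> INR (f i) <= c) -> INR (sumn (map f s)) <= INR (size s) * c.
Proof.
elim: s => [|i s IH] fc; first by rewrite /= Rmult_0_l; apply: Rle_refl.
change (INR (f i + sumn (map f s)) <= INR (size s).+1 * c).
rewrite INR_addn S_INR Rmult_plus_distr_r Rmult_1_l Rplus_comm.
apply: Rplus_le_compat; last by apply: fc; rewrite mem_head.
by apply: IH => j js; apply: fc; rewrite in_cons js orbT.
Qed.

Lemma size_tuples_le (X : Type) (Ls : nat -> seq X) K x : 0 < K -> 0 <= x ->
  (forall s, INR (size (Ls s)) <= K * exp (x * INR s)) ->
  forall D t, INR (size (tuples_le Ls D t)) <= (INR t + 1) ^ D * K ^ D * exp (x * INR t).
Proof.
move=> K0 x0 LsK; elim => [|D IH] t.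
  by rewrite /= !Rmult_1_l -exp_0; apply: exp_le; apply: Rmult_le_pos => //; apply: pos_INR.
rewrite tuples_leS size_flatten /shape -map_comp.
under eq_map => s do rewrite /= size_allpairs.
apply: Rle_trans (INR_sumn_le (c := (INR t + 1) ^ D * K ^ D.+1 * exp (x * INR t)) _) _.
  move=> s; rewrite mem_iota add0n ltnS => st.
  have := IH (t - s)%N; rewrite INR_muln INR_subn // => IHs.
  have := INR_leq st; have := pos_INR s => s0 st'.
  have tsD : (INR t - INR s + 1) ^ D <= (INR t + 1) ^ D by apply: pow_incr; lra.
  have := pow_lt K D K0; have := exp_pos (x * INR t) => e0 KD0.
  apply: Rle_trans (Rmult_le_compat _ _ _ _ (pos_INR _) (pos_INR _) (LsK s) IHs) _.
  have -> : K * exp (x * INR s) * ((INR t - INR s + 1) ^ D * K ^ D * exp (x * (INR t - INR s)))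
    = (INR t - INR s + 1) ^ D * K ^ D.+1 * exp (x * INR t).
    have -> : exp (x * INR t) = exp (x * INR s) * exp (x * (INR t - INR s)).
      by rewrite -exp_plus; congr exp; ring.
    rewrite /=; ring.
  by apply: Rmult_le_compat_r; [lra|apply: Rmult_le_compat_r; [apply: pow_le; lra|]].
by rewrite size_iota S_INR /=; apply: Req_le; ring.
Qed.

End TupleCount.

Section TreeMaps.
Variable d : nat.

(** Unlike automorphisms, such maps are evidently closed under taking sections. *)
Definition is_tree_emb (g : tfun d) : Prop :=
  [/\ injective g, forall w, size (g w) = size w & forall v w, exists u, g (v ++ w) = g v ++ u].

Lemma aut_tree_emb g : is_aut g -> is_tree_emb g.
Proof. by case=> /bij_inj gi [gs gp]; split. Qed.

Lemma tree_emb_id : is_tree_emb id.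
Proof. by split => // v w; exists w. Qed.

Lemma tree_emb_comp a b : is_tree_emb a -> is_tree_emb b -> is_tree_emb (a \o b).
Proof.
case=> ai asz ap [bi bsz bp]; split => [|w|v w] /=; first exact: inj_comp.
  by rewrite asz bsz.
have [u ->] := bp v w; have [u' ->] := ap (b v) u; by exists u'.
Qed.

Lemma tree_emb_cons g x u : is_tree_emb g ->
  g (x :: u) = head x (g [:: x]) :: section g x u.
Proof.
case=> _ gsz gp; have [u' gxu] := gp [:: x] u; move: (gsz [:: x]) gxu.
by case: (g [:: x]) => [|y [|]] //= _ gxu; rewrite /section gxu.
Qed.

Lemma tree_emb_section g x : is_tree_emb g -> is_tree_emb (section g x).
Proof.
move=> ge; have gc := tree_emb_cons x ^~ ge; case: ge => gi gsz gp; split.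
- by move=> u u' E; have := gc u; rewrite E -gc => /gi [].
- by move=> w; rewrite /section size_behead gsz.
- move=> v w; have [u guv] := gp (x :: v) w; exists u.
  by rewrite /section -cat_cons guv gc.
Qed.

Lemma section_comp a b x : is_tree_emb b ->
  section (a \o b) x = section a (head x (b [:: x])) \o section b x.
Proof. by move=> be; apply: functional_extensionality => u; rewrite /section /= tree_emb_cons. Qed.

Fixpoint section_at (g : tfun d) (w : vert d) : tfun d :=
  if w is x :: w' then section_at (section g x) w' else g.

Lemma tree_emb_nil g : is_tree_emb g -> g [::] = [::].
Proof. by case=> _ gsz _; move: (gsz [::]); case: (g [::]). Qed.

Lemma section_at_comp a b w : is_tree_emb a -> is_tree_emb b ->
  section_at (a \o b) w = section_at a (b w) \o section_at b w.
Proof.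
elim: w a b => [|x w IH] a b ae be; first by rewrite /= tree_emb_nil.
rewrite /= section_comp // [b (x :: w)]tree_emb_cons //.
by rewrite (IH _ _ (tree_emb_section _ ae) (tree_emb_section _ be)) [in RHS]/=.
Qed.

Lemma tree_emb_cat g w u : is_tree_emb g -> g (w ++ u) = g w ++ section_at g w u.
Proof.
elim: w g => [|x w IH] g ge /=; first by rewrite tree_emb_nil.
rewrite [g (x :: _ ++ _)]tree_emb_cons // [g (x :: w)]tree_emb_cons //.
by rewrite IH //; apply: tree_emb_section.
Qed.

Lemma section_at_id w : section_at id w = id.
Proof. by elim: w => //= x w IH; rewrite -{2}IH. Qed.

Fixpoint level (L : nat) : seq (vert d) :=
  if L is L'.+1 then [seq x :: w | x <- enum 'I_d, w <- level L'] else [:: [::]].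

Lemma mem_level L w : (w \in level L) = (size w == L).
Proof.
elim: L w => [|L IH] [|x w] //=; rewrite ?in_cons ?in_nil ?orbF //.
  by apply/negP => /allpairsP [[y v] [_ _ /=]].
apply/allpairsP/idP => [[[y v]] [_ /= vL [_ ->]]|wL]; first by rewrite eqSS -IH.
by exists (x, w); rewrite mem_enum IH.
Qed.

Lemma uniq_level L : uniq (level L).
Proof.
elim: L => [|L IH] //=; apply: allpairs_uniq => //; first exact: enum_uniq.
by move=> [x1 w1] [x2 w2] _ _ /= [-> ->].
Qed.

Lemma perm_level_emb L b : is_tree_emb b -> perm_eq [seq b w | w <- level L] (level L).
Proof.
case=> bi bsz _; have bu : uniq [seq b w | w <- level L] by rewrite map_inj_uniq ?uniq_level.
apply: uniq_perm => //; first exact: uniq_level.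
have sub : {subset [seq b w | w <- level L] <= level L}.
  by move=> v /mapP [w wL ->]; rewrite mem_level bsz -mem_level.
by case: (uniq_min_size bu sub (eq_leq (esym (size_map _ _)))).
Qed.

Lemma tree_emb_portrait_inj L g g' : (0 < d)%N -> is_tree_emb g -> is_tree_emb g' ->
  (forall w, w \in level L -> g w = g' w /\ section_at g w = section_at g' w) -> g = g'.
Proof.
move=> d0 ge ge' gg'; apply: functional_extensionality => v.
case: (leqP L (size v)) => vL.
  have tL : take L v \in level L by rewrite mem_level size_take_min; apply/eqP/minn_idPl.
  by rewrite -(cat_take_drop L v) !tree_emb_cat //; case: (gg' _ tL) => -> ->.
set z := nseq (L - size v) (Ordinal d0).
have vz : v ++ z \in level L by rewrite mem_level size_cat size_nseq subnKC // ltnW.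
have [E _] := gg' _ vz; move: E; rewrite !tree_emb_cat // => E.
case: ge ge' => _ gsz _ [_ g'sz _].
by rewrite -(take_size_cat (section_at g v z) (gsz v)) E take_size_cat.
Qed.

End TreeMaps.

Section WordNorm.
Variables (d : nat) (S : nat -> seq (tfun d)) (l : nat -> tfun d -> nat).
Local Notation G := (inG S).
Local Notation nrm := (norm S l).

Lemma prod_word_cat (u v : seq (tfun d)) : prod_word (u ++ v) = prod_word u \o prod_word v.
Proof. by elim: u => //= s u ->. Qed.

Lemma prod_word_flatten (ws : seq (seq (tfun d))) :
  prod_word (flatten ws) = prod_word (map (@prod_word d) ws).
Proof. by elim: ws => //= u ws IH; rewrite prod_word_cat IH. Qed.

Lemma word_over_cat (T : seq (tfun d)) u v :
  word_over T (u ++ v) <-> word_over T u /\ word_over T v.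
Proof. exact: List.Forall_app. Qed.

Lemma weight_cat (f : tfun d -> nat) u v : weight f (u ++ v) = (weight f u + weight f v)%N.
Proof. by rewrite /weight map_cat sumn_cat. Qed.

Lemma norm_spec nu g : G nu g ->
  word_weight (S nu) (l nu) g (nrm nu g) /\
  forall m, word_weight (S nu) (l nu) g m -> (nrm nu g <= m)%N.
Proof.
move=> [w [wS wg]]; apply: (epsilon_spec (inhabits 0%N)
  (fun n => word_weight (S nu) (l nu) g n /\
            forall m, word_weight (S nu) (l nu) g m -> (n <= m)%N)).
by apply: (@ex_least _ (weight (l nu) w)); exists w.
Qed.

Lemma norm_le_weight nu w : word_over (S nu) w -> (nrm nu (prod_word w) <= weight (l nu) w)%N.
Proof. by move=> wS; apply: (proj2 (norm_spec _)); [exists w|exists w]. Qed.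

Lemma inG_comp nu a b : G nu a -> G nu b -> G nu (a \o b).
Proof.
move=> [u [uS <-]] [v [vS <-]]; exists (u ++ v).
by rewrite prod_word_cat; split => //; apply/word_over_cat.
Qed.

Lemma inG_id nu : G nu id.
Proof. by exists [::]; split => //; constructor. Qed.

Lemma inG_prod_word nu bs : List.Forall (G nu) bs -> G nu (prod_word bs).
Proof. by elim=> [|b bs' Gb _ IH] /=; [apply: inG_id|apply: inG_comp]. Qed.

Lemma norm_id nu : nrm nu id = 0%N.
Proof. by apply/eqP; rewrite -leqn0 (norm_le_weight (w := [::])) //; constructor. Qed.

Lemma norm_comp_le nu a b : G nu a -> G nu b -> (nrm nu (a \o b) <= nrm nu a + nrm nu b)%N.
Proof.
move=> Ga Gb; have [[u [uS [<- <-]]] _] := norm_spec Ga; have [[v [vS [<- <-]]] _] := norm_spec Gb.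
by rewrite -prod_word_cat -weight_cat norm_le_weight //; apply/word_over_cat.
Qed.

Definition ball nu n (g : tfun d) : Prop := G nu g /\ (nrm nu g <= n)%N.

Lemma ball_prod_word nu n w :
  word_over (S nu) w -> (weight (l nu) w <= n)%N -> ball nu n (prod_word w).
Proof. by move=> wS wn; split; [exists w|apply: leq_trans (norm_le_weight wS) wn]. Qed.

Lemma ball_word nu n g : ball nu n g ->
  exists w, [/\ word_over (S nu) w, prod_word w = g & (weight (l nu) w <= n)%N].
Proof. by case=> /norm_spec [[w [wS [wg <-]]] _] gn; exists w. Qed.

Lemma incompS k nu g : incomp S l k.+1 nu g -> incomp S l k nu g.
Proof.
elim: k nu g => [|k IH] nu g /=; first by case.
by case=> Gg [secs e]; split => //; split => // x; apply: IH.
Qed.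

Lemma incomp_le k L nu g : (k <= L)%N -> incomp S l L nu g -> incomp S l k nu g.
Proof. by move=> /subnK <-; elim: (L - k)%N => [|j IH] //= /incompS. Qed.

End WordNorm.

Section SimilarFamily.
Variables (d : nat) (S : nat -> seq (tfun d)) (l : nat -> tfun d -> nat).
Hypothesis Hfam : non_l1_expanding_similar_family S l.
Local Notation G := (inG S).
Local Notation nrm := (norm S l).

Lemma pseudolength_le1 nu s : List.In s (S nu) -> (l nu s <= 1)%N.
Proof. by case: (Hfam nu) => _ [_ [_ [+ _]]]; apply. Qed.

Lemma inG_tree_emb nu g : G nu g -> is_tree_emb g.
Proof.
case=> w [+ <-]; elim: w => [|s w IH] /= wS; first exact: tree_emb_id.
inversion wS; subst; apply: tree_emb_comp; last exact: IH.
by apply: aut_tree_emb; case: (Hfam nu) => + _; apply.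
Qed.

Lemma inG_section nu g x : G nu g -> G nu.+1 (section g x).
Proof. by move=> Gg; case: (Hfam nu) => _ [_ [_ [_ [_ /(_ g Gg) [+ _]]]]]; apply. Qed.

Lemma sum_norm_section_le nu g : G nu g ->
  (\sum_(x < d) nrm nu.+1 (section g x) <= nrm nu g)%N.
Proof. by move=> Gg; case: (Hfam nu) => _ [_ [_ [_ [_ /(_ g Gg) [_]]]]]. Qed.

Lemma inG_section_at nu g w : G nu g -> G (nu + size w) (section_at g w).
Proof.
elim: w nu g => [|x w IH] nu g Gg /=; first by rewrite addn0.
by rewrite -addSnnS; apply/IH/inG_section.
Qed.

Definition level_norm L nu g : nat :=
  \sum_(w <- level d L) nrm (nu + L) (section_at g w).

Lemma level_norm0 nu g : level_norm 0 nu g = nrm nu g.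
Proof. by rewrite /level_norm big_seq1 addn0. Qed.

Lemma level_normS L nu g :
  level_norm L.+1 nu g = (\sum_(x < d) level_norm L nu.+1 (section g x))%N.
Proof.
rewrite /level_norm /= big_allpairs_dep big_enum /=.
by apply: eq_bigr => x _; rewrite addSnnS.
Qed.

Lemma level_norm_le L nu g : G nu g -> (level_norm L nu g <= nrm nu g)%N.
Proof.
elim: L nu g => [|L IH] nu g Gg; first by rewrite level_norm0.
rewrite level_normS; apply: leq_trans (sum_norm_section_le Gg).
by apply: leq_sum => x _; apply/IH/inG_section.
Qed.

Lemma level_norm_eq_incomp L nu g : G nu g -> level_norm L nu g = nrm nu g -> incomp S l L nu g.
Proof.
elim: L nu g => [|L IH] nu g Gg //; rewrite level_normS => Lg.
have sec_eq : forall x, level_norm L nu.+1 (section g x) = nrm nu.+1 (section g x).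
  apply: sum_eq_le_pointwise => [y|]; first by apply/level_norm_le/inG_section.
  by rewrite Lg sum_norm_section_le.
split => //; split => [x|]; first by apply: IH (inG_section _ Gg) (sec_eq x).
by rewrite -Lg; apply: eq_bigr => x _; rewrite sec_eq.
Qed.

Lemma level_norm_lt L nu g : G nu g -> ~ incomp S l L nu g -> (level_norm L nu g < nrm nu g)%N.
Proof.
move=> Gg nI; rewrite ltn_neqAle level_norm_le // andbT.
by apply/eqP => /(level_norm_eq_incomp Gg).
Qed.

Lemma norm0_incomp_inf nu g : G nu g -> nrm nu g = 0%N -> incomp_inf S l nu g.
Proof.
move=> Gg g0 k _; apply: level_norm_eq_incomp => //.
by apply/eqP; rewrite g0 -leqn0 -g0 level_norm_le.
Qed.

Lemma level_norm_id L nu : level_norm L nu id = 0%N.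
Proof. by rewrite /level_norm big1_seq // => w _; rewrite section_at_id norm_id. Qed.

Lemma level_norm_comp_le L nu a b : G nu a -> G nu b ->
  (level_norm L nu (a \o b) <= level_norm L nu a + level_norm L nu b)%N.
Proof.
move=> Ga Gb; have ae := inG_tree_emb Ga; have be := inG_tree_emb Gb.
have {1}-> : level_norm L nu a = \sum_(w <- level d L) nrm (nu + L) (section_at a (b w)).
  by rewrite /level_norm -(perm_big _ (perm_level_emb L be)) big_map.
rewrite /level_norm -big_split big_seq_cond [X in (_ <= X)%N]big_seq_cond.
apply: leq_sum => w /andP [+ _]; rewrite mem_level => /eqP wL.
rewrite section_at_comp //; apply: norm_comp_le.
  by have := inG_section_at (b w) Ga; case: be => _ -> _; rewrite wL.
by have := inG_section_at w Gb; rewrite wL.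
Qed.

End SimilarFamily.

Section Portraits.
Variables (d : nat) (S : nat -> seq (tfun d)) (l : nat -> tfun d -> nat).
Hypothesis Hfam : non_l1_expanding_similar_family S l.
Hypothesis d_gt0 : (0 < d)%N.
Local Notation G := (inG S).
Local Notation ball := (ball S l).
Local Notation level_norm := (level_norm S l).

Definition portrait L (g : tfun d) :=
  ([seq g w | w <- level d L], [seq section_at g w | w <- level d L]).

Definition portrait_cover nu L (Ls : nat -> seq (tfun d)) t : seq (tfun d) :=
  let D := size (level d L) in
  [seq epsilon (inhabits id) (fun g => G nu g /\ portrait L g = p)
  | p <- [seq (a, r) | a <- allseqs (level d L) D, r <- tuples_le Ls D t]].

Lemma size_portrait_cover nu L Ls t : let D := size (level d L) in
  size (portrait_cover nu L Ls t) = (D ^ D * size (tuples_le Ls D t))%N.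
Proof. by rewrite /portrait_cover size_map size_allpairs size_allseqs. Qed.

Lemma portrait_cover_covers nu L Ls t : (forall s, covers (ball (nu + L) s) (Ls s)) ->
  covers (fun g => G nu g /\ (level_norm L nu g <= t)%N) (portrait_cover nu L Ls t).
Proof.
move=> Lcov g [Gg gt]; have ge := inG_tree_emb Hfam Gg.
pose pick p := epsilon (inhabits id) (fun g => G nu g /\ portrait L g = p).
have pg : List.In (portrait L g) [seq (a, r) | a <- allseqs (level d L) (size (level d L)),
                                              r <- tuples_le Ls (size (level d L)) t].
  apply: (In_allpairs pair).
    rewrite -(size_map g); apply: In_allseqs => _ /List.in_map_iff [w [<- /InP wL]].
    by apply/InP; case: ge => _ gsz _; rewrite mem_level gsz -mem_level.
  rewrite -(size_map (section_at g)); apply: (In_tuples_le Lcov).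
    apply/List.Forall_forall => _ /List.in_map_iff [w [<- /InP]].
    by rewrite mem_level => /eqP <-; apply: inG_section_at.
  by rewrite -map_comp sumnE big_map.
have [Gpg pgE] : G nu (pick (portrait L g)) /\ portrait L (pick (portrait L g)) = portrait L g.
  by apply: (epsilon_spec (inhabits id) (fun h => G nu h /\ portrait L h = portrait L g)); exists g.
suff <- : pick (portrait L g) = g by apply: (List.in_map pick).
apply: (tree_emb_portrait_inj (L := L) d_gt0 (inG_tree_emb Hfam Gpg) ge) => w wL.
have wi : (index w (level d L) < size (level d L))%N by rewrite index_mem.
case: pgE => E1 E2; split.
  by have := congr1 (nth [::] ^~ (index w (level d L))) E1; rewrite /= !(nth_map [::]) // nth_index.
by have := congr1 (nth id ^~ (index w (level d L))) E2; rewrite /= !(nth_map [::]) // nth_index.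
Qed.

End Portraits.

Section GrowthRates.
Variables (d : nat) (S : nat -> seq (tfun d)) (l : nat -> tfun d -> nat).
Hypothesis Hfam : non_l1_expanding_similar_family S l.
Hypothesis d_gt0 : (0 < d)%N.
Local Notation ball := (ball S l).
Local Open Scope R_scope.

Definition growth_le nu x : Prop :=
  exists Ls : nat -> seq (tfun d),
    (forall n, covers (ball nu n) (Ls n)) /\ exp_rate_le (fun n => INR (size (Ls n))) x.

Lemma growth_le_mono nu x y : x <= y -> growth_le nu x -> growth_le nu y.
Proof. by move=> xy [Ls [Lcov Lrate]]; exists Ls; split => //; apply: exp_rate_le_mono Lrate. Qed.

Lemma size_portrait_cover_le nu L Ls K x t : let D := size (level d L) in
  0 < K -> 0 <= x -> (forall s, INR (size (Ls s)) <= K * exp (x * INR s)) ->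
  INR (size (portrait_cover S nu L Ls t)) <=
    INR (D ^ D) * K ^ D * ((INR t + 1) ^ D * exp (x * INR t)).
Proof.
move=> D K0 x0 LsK; rewrite size_portrait_cover INR_muln -/D Rmult_assoc.
apply: Rmult_le_compat_l; first exact: pos_INR.
by apply: Rle_trans (size_tuples_le K0 x0 LsK D t) _; apply: Req_le; ring.
Qed.

Lemma growth_le_lift nu L x eps :
  0 <= x -> 0 < eps -> growth_le (nu + L) x -> growth_le nu (x + eps).
Proof.
move=> x0 eps0 [Ls [Lcov [K [K0 LsK]]]]; exists (portrait_cover S nu L Ls); split.
  move=> n g [Gg gn]; apply: portrait_cover_covers => //.
  by split => //; apply: leq_trans (level_norm_le Hfam L Gg) gn.
apply: exp_rate_le_trans (fun n => @size_portrait_cover_le nu L Ls K x n K0 x0 LsK) _.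
apply: exp_rate_le_scale; first by apply: Rmult_le_pos; [apply: pos_INR|apply: pow_le; lra].
rewrite Rplus_comm; apply: exp_rate_le_mul => [n|n||]; last exact: exp_rate_le_exp.
- by apply: pow_le; have := pos_INR n; lra.
- exact: Rlt_le (exp_pos _).
- exact: exp_rate_le_succ_pow.
Qed.

Lemma portrait_cover_rate nu L Ls K x M p eps :
  (0 < M)%N -> (0 < p)%N -> 0 < K -> 0 <= x -> 0 < eps ->
  (forall s, INR (size (Ls s)) <= K * exp (x * INR s)) ->
  exp_rate_le (fun n => INR (size (portrait_cover S nu L Ls (n - (n %/ M).+1 %/ p))))
    (x * (1 - / (INR M * INR p)) + eps).
Proof.
move=> M0 p0 K0 x0 eps0 LsK; set D := size (level d L); set y := x * (1 - / (INR M * INR p)).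
apply: (@exp_rate_le_trans _
  (fun n => INR (D ^ D) * K ^ D * ((INR n + 1) ^ D * (exp x * exp (y * INR n))))).
  move=> n; set t := (n - _)%N; apply: Rle_trans (size_portrait_cover_le nu L t K0 x0 LsK) _.
  have tn : INR t <= INR n by apply/INR_leq/leq_subr.
  have t0 := pos_INR t.
  apply: Rmult_le_compat_l; first by apply: Rmult_le_pos; [apply: pos_INR|apply: pow_le; lra].
  apply: Rmult_le_compat; [apply: pow_le; lra|exact: Rlt_le (exp_pos _)| |].
    by apply: pow_incr; split; lra.
  rewrite -exp_plus; apply: exp_le; rewrite /y.
  have := Rmult_le_compat_l x _ _ x0 (sub_div_div_le n M0 p0); rewrite -/t; lra.
apply: exp_rate_le_scale; first by apply: Rmult_le_pos; [apply: pos_INR|apply: pow_le; lra].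
rewrite Rplus_comm; apply: exp_rate_le_mul => [n|n||].
- by apply: pow_le; have := pos_INR n; lra.
- by apply: Rmult_le_pos; apply: Rlt_le; apply: exp_pos.
- exact: exp_rate_le_succ_pow.
- by apply: exp_rate_le_scale; [apply: Rlt_le; apply: exp_pos|apply: exp_rate_le_exp].
Qed.

End GrowthRates.

Section Blocks.
Variables (d : nat) (S : nat -> seq (tfun d)) (l : nat -> tfun d -> nat).
Hypothesis Hfam : non_l1_expanding_similar_family S l.
Local Notation G := (inG S).
Local Notation nrm := (norm S l).
Local Notation ball := (ball S l).
Local Notation level_norm := (level_norm S l).

Lemma word_first_heavy nu w : word_over (S nu) w -> (0 < weight (l nu) w)%N ->
  exists u s v, [/\ w = u ++ s :: v, weight (l nu) u = 0%N, (0 < l nu s)%N & List.In s (S nu)].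
Proof.
elim: w => [|s w IH] // wS; inversion wS as [|? ? sS wS']; subst.
case: (posnP (l nu s)) => [s0|s_pos] w_pos; last by exists [::], s, w.
have [|u [s' [v [-> u0 s'_pos s'S]]]] := IH wS'; first by move: w_pos; rewrite /weight /= s0.
by exists (s :: u), s', v; split => //; rewrite /weight /= s0.
Qed.

Lemma ball_succ nu n g : ball nu n.+1 g ->
  exists f s b, [/\ ball nu 0 f, s = id \/ List.In s (S nu), ball nu n b & g = f \o (s \o b)].
Proof.
case/ball_word => w [wS <- wn]; case: (leqP (weight (l nu) w) n) => wn'.
  by exists id, id, (prod_word w); split; [split; [apply: inG_id|rewrite norm_id]|left|
    apply: ball_prod_word|].
have [u [s [v [wE u0 s_pos sS]]]] := word_first_heavy wS (leq_ltn_trans (leq0n _) wn').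
move: wS wn; rewrite wE => /word_over_cat [uS svS]; inversion svS as [|? ? _ vS]; subst.
rewrite weight_cat u0 /weight /= => svn.
exists (prod_word u), s, (prod_word v); split; last by rewrite prod_word_cat.
- by apply: ball_prod_word; rewrite ?u0.
- by right.
- by apply: ball_prod_word => //; rewrite /weight; lia.
Qed.

Fixpoint crude_cover nu (LF : seq (tfun d)) n : seq (tfun d) :=
  if n is n'.+1 then
    [seq f \o x | f <- LF, x <- [seq s \o b | s <- id :: S nu, b <- crude_cover nu LF n']]
  else LF.

Lemma size_crude_cover nu LF n :
  size (crude_cover nu LF n) = (size LF * ((size (S nu)).+1 * size LF) ^ n)%N.
Proof.
elim: n => [|n IH]; first by rewrite muln1.
change (size [seq f \o x | f <- LF, x <- [seq s \o b | s <- id :: S nu, b <- crude_cover nu LF n]]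
  = size LF * ((size (S nu)).+1 * size LF) ^ n.+1)%N.
by rewrite !size_allpairs IH expnS /= !mulnA [(size LF * _.+1)%N]mulnC.
Qed.

Lemma crude_cover_covers nu LF : covers (ball nu 0) LF ->
  forall n, covers (ball nu n) (crude_cover nu LF n).
Proof.
move=> LFcov; elim=> // n IH g /ball_succ [f [s [b [f0 sS bn ->]]]].
apply: (In_allpairs comp); first exact: LFcov.
by apply: (In_allpairs comp); [case: sS => [->|]; [left|right]|apply: IH].
Qed.

Lemma split_weight nu w m : word_over (S nu) w -> (m <= weight (l nu) w)%N ->
  exists u v, w = u ++ v /\ weight (l nu) u = m.
Proof.
elim: w m => [|s w IH] m wS wm.
  by exists [::], [::]; split => //; move: wm; rewrite leqn0 => /eqP ->.
case: m wm => [|m] wm; first by exists [::], (s :: w).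
inversion wS as [|? ? sS wS']; subst; have s1 := pseudolength_le1 Hfam sS.
have [|u [v [-> uw]]] := IH (m.+1 - l nu s)%N wS'; first by move: wm; rewrite /weight /=; lia.
by exists (s :: u), v; split => //; rewrite /weight /= -/(weight _ u) uw; lia.
Qed.

Lemma word_blocks nu M q w : word_over (S nu) w -> (weight (l nu) w <= q.+1 * M)%N ->
  exists ws : seq (seq (tfun d)), [/\ size ws = q.+1, flatten ws = w &
    List.Forall (fun u => word_over (S nu) u /\ (weight (l nu) u <= M)%N) ws].
Proof.
elim: q w => [|q IH] w wS wM.
  by exists [:: w]; rewrite /= cats0 mul1n in wM *; split => //; repeat constructor.
case: (leqP (weight (l nu) w) M) => wM'.
  have [|ws [wsq ws0 wsM]] := IH [::] (List.Forall_nil _) => //.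
  by exists (w :: ws); split; rewrite /= ?wsq ?ws0 ?cats0 //; constructor.
have [u [v [wE uM]]] := split_weight wS (ltnW wM').
move: wS; rewrite wE => /word_over_cat [uS vS].
have [|ws [wsq <- wsM]] := IH v vS; first by move: wM; rewrite wE weight_cat uM mulSn leq_add2l.
by exists (u :: ws); split; rewrite /= ?wsq //; constructor => //; rewrite uM.
Qed.

Section KeyCover.
Variables (nu M p L : nat) (LI LB : seq (tfun d)).
Hypothesis LB_cov : covers (ball nu M) LB.
Hypothesis LI_cov : covers (fun b => ball nu M b /\ incomp_inf S l nu b) LI.
Hypothesis LB_dichotomy : forall b, ball nu M b -> incomp_inf S l nu b \/ ~ incomp S l L nu b.

(** Every compressible block lowers the level norm of the product by at least one. *)
Lemma level_norm_prod_blocks bs : List.Forall (ball nu M) bs ->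
  exists c, (level_norm L nu (prod_word bs) + c <= sumn (map (nrm nu) bs))%N /\
            List.In bs (mixed_seqs LI LB (size bs) c).
Proof.
elim: bs => [|b bs' IH] bsM; first by exists 0%N; rewrite level_norm_id; split => //; left.
inversion bsM as [|? ? [Gb bM] bs'M]; subst; have [c [bsc bs'c]] := IH bs'M.
have Gbs' : G nu (prod_word bs').
  by apply: inG_prod_word; apply: List.Forall_impl bs'M => ? [].
have comp_le := level_norm_comp_le Hfam L Gb Gbs'.
case: (LB_dichotomy (conj Gb bM)) => bI.
  exists c; split; last by apply: In_mixed_seqsI => //; apply: LI_cov.
  by have := level_norm_le Hfam L Gb; rewrite /=; lia.
exists c.+1; split; last by apply: In_mixed_seqsB => //; apply: LB_cov.
by have := level_norm_lt Hfam Gb bI; rewrite /=; lia.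
Qed.

Lemma ball_dichotomy n g : let q := (n %/ M)%N in let j := (q.+1 %/ p)%N in
  (0 < M)%N -> ball nu n g ->
  (G nu g /\ (level_norm L nu g <= n - j)%N) \/
  List.In g (map (@prod_word d) (mixed_seqs LI LB q.+1 j)).
Proof.
move=> q j M_gt0 /ball_word [w [wS <- wn]].
have [|ws [wsq wsw wsM]] := word_blocks (M := M) (q := q) wS.
  by apply: leq_trans wn _; apply: ltnW; apply: ltn_ceil.
subst w.
have bsM : List.Forall (ball nu M) (map (@prod_word d) ws).
  by elim: ws wsM {wsq wn wS} => //= u ws' IH /List.Forall_cons_iff [[uS uM] /IH];
    constructor => //; apply: ball_prod_word.
have bsn : (sumn (map (nrm nu) (map (@prod_word d) ws)) <= n)%N.
  apply: leq_trans wn; elim: ws wsM {wsq bsM wS} => //= u ws' IH /List.Forall_cons_iff [[uS _] /IH].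
  by rewrite weight_cat; apply: leq_add; apply: norm_le_weight.
have [c [bsc bsI]] := level_norm_prod_blocks bsM.
rewrite prod_word_flatten; case: (leqP j c) => jc.
  by left; split; [apply: inG_prod_word; apply: List.Forall_impl bsM => ? []|lia].
right; apply: List.in_map; rewrite -wsq -(size_map (@prod_word d)).
exact: mixed_seqs_mono (ltnW jc) bsI.
Qed.

End KeyCover.

End Blocks.

Section MixedSeqCount.
Variables (X : Type) (A : nat) (delta : nat -> nat).
Hypothesis delta_gt0 : forall n, (0 < delta n)%N.

Lemma size_mixed_seqs_le_pow (LI LB : seq X) M q j : (0 < M)%N ->
  (size LI <= M.+1 * delta M)%N -> (size LB <= delta 0 * (A.+1 * delta 0) ^ M)%N ->
  (size (mixed_seqs LI LB q.+1 j) <=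
     (4 * M.+1 * delta M) ^ q.+1 * ((2 * delta 0 * A.+1) ^ 2) ^ (M * j))%N.
Proof.
move=> M0 LIsz LBsz; apply: leq_trans (size_mixed_seqs _ _ _ _) _.
rewrite -expnMn; apply: leq_mul.
  apply: leq_expn2r; have := delta_gt0 M; move: LIsz; set y := (M.+1 * delta M)%N.
  have : (0 < y)%N by rewrite muln_gt0 delta_gt0.
  by rewrite -mulnA -/y; lia.
rewrite expnM; apply: leq_expn2r.
set E := (2 * delta 0 * A.+1)%N; set Y := ((A.+1 * delta 0) ^ M)%N.
have E0 : (0 < E)%N by rewrite !muln_gt0 delta_gt0.
have Y0 : (0 < Y)%N by rewrite expn_gt0 muln_gt0 delta_gt0.
have LBY : ((size LB).+1 <= 2 * delta 0 * Y)%N by have := delta_gt0 0; nia.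
have YE : (2 * delta 0 * Y <= E ^ M.+1)%N.
  by rewrite expnS leq_mul ?leq_expn2r // /E; nia.
by apply: leq_trans LBY (leq_trans YE _); rewrite -expnM leq_pexp2l //; lia.
Qed.

Local Open Scope R_scope.

Lemma mixed_seqs_rate (LI LB : seq X) M p h :
  (0 < M)%N -> (0 < p)%N -> 0 < h ->
  (size LI <= M.+1 * delta M)%N -> (size LB <= delta 0 * (A.+1 * delta 0) ^ M)%N ->
  INR (4 * M.+1 * delta M) <= exp (h * INR M / 4) ->
  INR ((2 * delta 0 * A.+1) ^ 2) <= exp (h * INR p / 4) ->
  exp_rate_le (fun n => INR (size (mixed_seqs LI LB (n %/ M).+1 ((n %/ M).+1 %/ p)))) (h / 2).
Proof.
move=> M0 p0 h0 LIsz LBsz aM bp; exists (exp (h * INR M / 2)); split => [|n]; first exact: exp_pos.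
apply: Rle_trans (INR_leq (size_mixed_seqs_le_pow _ _ M0 LIsz LBsz)) _.
by apply: (pow_mul_le_exp h0 _ _ aM bp); apply: leq_divM.
Qed.

End MixedSeqCount.

Section GoodLevels.
Variables (d : nat) (S : nat -> seq (tfun d)) (l : nat -> tfun d -> nat).
Variables (A : nat) (delta : nat -> nat).
Hypothesis Hfam : non_l1_expanding_similar_family S l.
Hypothesis d_gt0 : (0 < d)%N.
Hypothesis size_S_le : forall nu, (size (S nu) <= A)%N.
Hypothesis delta_mono : nondecreasing delta.
Hypothesis delta_gt0 : forall n, (0 < delta n)%N.
Local Notation nrm := (norm S l).
Local Notation ball := (ball S l).
Local Notation growth_le := (growth_le S l).

Definition good nu : Prop :=
  forall n, card_le (fun g => incomp_inf S l nu g /\ sphere S l nu n g) (delta n).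

Lemma good_ball0_cover nu : good nu -> exists LF, covers (ball nu 0) LF /\ (size LF <= delta 0)%N.
Proof.
move=> /(_ 0%N) [LF [LFsz LFcov]]; exists LF; rewrite size_length; split => // g [Gg g0].
have {}g0 : nrm nu g = 0%N by apply/eqP; rewrite -leqn0.
by apply: LFcov; split; [apply: norm0_incomp_inf|].
Qed.

Lemma good_incomp_cover nu M : good nu ->
  exists LI, covers (fun b => ball nu M b /\ incomp_inf S l nu b) LI /\
             (size LI <= M.+1 * delta M)%N.
Proof.
move=> gnu; elim: M => [|M [LI [LIcov LIsz]]].
  have [LF [LFsz LFcov]] := gnu 0%N; exists LF; rewrite mul1n size_length; split => //.
  by move=> g [[Gg g0] gI]; apply: LFcov; split => //; split => //; apply/eqP; rewrite -leqn0.
have [LS [LSsz LScov]] := gnu M.+1; exists (LI ++ LS); split.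
  move=> b [[Gb bM] bI]; apply: List.in_or_app; case: (leqP (nrm nu b) M) => bM'.
    by left; apply: LIcov.
  by right; apply: LScov; split => //; split => //; apply/eqP; rewrite eqn_leq bM.
rewrite size_cat mulSn addnC size_length; apply: leq_add => //.
by apply: leq_trans LIsz _; rewrite leq_mul2l delta_mono ?orbT.
Qed.

Lemma good_ball_cover nu n : good nu ->
  exists LB, covers (ball nu n) LB /\ (size LB <= delta 0 * (A.+1 * delta 0) ^ n)%N.
Proof.
case/good_ball0_cover => LF [LFcov LFsz]; exists (crude_cover S nu LF n).
split; first exact: crude_cover_covers.
rewrite size_crude_cover; apply: leq_mul => //; apply: leq_expn2r.
by apply: leq_mul => //; rewrite ltnS.
Qed.

Lemma finite_incomp_dichotomy nu (s : seq (tfun d)) :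
  exists L, forall b, List.In b s -> incomp_inf S l nu b \/ ~ incomp S l L nu b.
Proof.
elim: s => [|b s [L0 IH]]; first by exists 0%N.
case: (classic (incomp_inf S l nu b)) => bI.
  by exists L0 => c [<-|/IH //]; left.
have [k kI] := not_all_ex_not _ _ bI.
have [_ bk] := imply_to_and _ _ kI.
exists (maxn L0 k) => c [<-|/IH [cI|cL0]]; [right => cI|by left|right => cI].
- by apply/bk/(incomp_le _ cI); rewrite leq_maxr.
- by apply/cL0/(incomp_le _ cI); rewrite leq_maxl.
Qed.

Local Open Scope R_scope.

Lemma good_growth_le nu : good nu -> growth_le nu (INR (A.+1 * delta 0)).
Proof.
case/good_ball0_cover => LF [LFcov LFsz]; exists (crude_cover S nu LF).
split; first exact: crude_cover_covers.
exists (INR (delta 0) + 1); split => [|n]; first by have := pos_INR (delta 0); lra.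
rewrite size_crude_cover INR_muln INR_expn.
have base : INR ((size (S nu)).+1 * size LF) <= exp (INR (A.+1 * delta 0)).
  have : ((size (S nu)).+1 * size LF <= A.+1 * delta 0)%N by rewrite leq_mul ?ltnS.
  by move/INR_leq; have := exp_ineq1_le (INR (A.+1 * delta 0)); lra.
apply: Rmult_le_compat; [exact: pos_INR|exact: pow_le (pos_INR _)| |].
  by have := INR_leq LFsz; lra.
by apply: pow_le_exp => //; apply: pos_INR.
Qed.

Lemma growth_le_step nu M p h x eps : good nu ->
  (0 < M)%N -> (0 < p)%N -> 0 < h -> 0 <= x -> 0 < eps ->
  INR (4 * M.+1 * delta M) <= exp (h * INR M / 4) ->
  INR ((2 * delta 0 * A.+1) ^ 2) <= exp (h * INR p / 4) ->
  (forall L, growth_le (nu + L) x) ->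
  growth_le nu (Rmax (x * (1 - / (INR M * INR p)) + eps) (h / 2)).
Proof.
move=> gnu M0 p0 h0 x0 eps0 aM bp upper.
have [LB [LBcov LBsz]] := good_ball_cover M gnu.
have [L LBdich] := finite_incomp_dichotomy nu LB.
have [LI [LIcov LIsz]] := good_incomp_cover M gnu.
have [Ls [Lcov [K [K0 LsK]]]] := upper L.
exists (fun n => portrait_cover S nu L Ls (n - (n %/ M).+1 %/ p) ++
                 map (@prod_word d) (mixed_seqs LI LB (n %/ M).+1 ((n %/ M).+1 %/ p))).
split.
  move=> n g gn; apply: List.in_or_app.
  case: (ball_dichotomy Hfam p LBcov LIcov (fun b bM => LBdich b (LBcov b bM)) M0 gn).
    by left; apply: portrait_cover_covers.
  by right.
apply: exp_rate_le_trans (exp_rate_le_add (portrait_cover_rate S nu L M0 p0 K0 x0 eps0 LsK)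
                                          (mixed_seqs_rate delta_gt0 M0 p0 h0 LIsz LBsz aM bp)).
by move=> n; rewrite size_cat size_map INR_addn; apply: Rle_refl.
Qed.

End GoodLevels.

Section Bootstrap.
Variables (d : nat) (S : nat -> seq (tfun d)) (l : nat -> tfun d -> nat).
Variables (A : nat) (delta : nat -> nat).
Hypothesis Hfam : non_l1_expanding_similar_family S l.
Hypothesis d_gt0 : (0 < d)%N.
Hypothesis size_S_le : forall nu, (size (S nu) <= A)%N.
Hypothesis delta_mono : nondecreasing delta.
Hypothesis delta_gt0 : forall n, (0 < delta n)%N.
Hypothesis good_often : forall N, exists nu, (N <= nu)%N /\ good S l delta nu.
Hypothesis delta_slow : ~ lesssim expn_R (fun n => INR (delta n)).
Local Notation growth_le := (growth_le S l).
Local Open Scope R_scope.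

Lemma growth_le_improve h : 0 < h -> exists e, 0 < e <= h / 4 /\
  forall nu, good S l delta nu ->
    (forall L, growth_le (nu + L) (h + e)) -> growth_le nu (h - 2 * e).
Proof.
move=> h0; have h4 : 0 < h / 4 by lra.
have [p [p0 bp]] := exp_archimed (INR ((2 * delta 0 * A.+1) ^ 2)) h4.
have [M [M0 aM]] := scale_le_exp_of_not_lesssim h0 delta_slow.
rewrite (_ : h / 4 * INR p = h * INR p / 4) in bp; last by field.
have Mp : 1 <= INR M * INR p by have := INR_leq M0; have := INR_leq p0; rewrite /=; nra.
set eta := / (INR M * INR p).
have eta0 : 0 < eta by apply: Rinv_0_lt_compat; lra.
have eta1 : eta <= 1 by rewrite /eta -Rinv_1; apply: Rinv_le_contravar; lra.
exists (h * eta / 8); split; first by split; nra.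
move=> nu gnu upper; have e0 : 0 < h * eta / 8 by nra.
have he0 : 0 <= h + h * eta / 8 by nra.
apply: growth_le_mono (growth_le_step Hfam d_gt0 size_S_le delta_mono delta_gt0
  gnu M0 p0 h0 he0 e0 aM bp upper).
by apply: Rmax_lub; rewrite -/eta; nra.
Qed.

Lemma growth_le_bounded nu : growth_le nu (INR (A.+1 * delta 0) + 1).
Proof.
have [nu' [nunu' gnu']] := good_often nu.
apply: (growth_le_lift Hfam d_gt0 (L := nu' - nu)) (pos_INR _) Rlt_0_1 _.
by rewrite subnKC //; apply: good_growth_le.
Qed.

(** Let [h] be the supremum of the rates [y] that fail at some level.  If [h > 0], rates slightly
   above [h] hold at every level, and [growth_le_improve] at a good level beyond a level where
   [h - e] fails pushes that failing rate below [h - e]. *)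
Lemma growth_le_all nu x : 0 < x -> growth_le nu x.
Proof.
move=> x0; apply: NNPP => bad; pose U y := exists nu, ~ growth_le nu y.
have Ubound : bound U.
  exists (INR (A.+1 * delta 0) + 1) => y [nu' nu'y]; apply: Rnot_lt_le => lt.
  exact/nu'y/(growth_le_mono (Rlt_le _ _ lt))/growth_le_bounded.
have [h [hub hlub]] := completeness U Ubound (ex_intro _ x (ex_intro _ nu bad)).
have h0 : 0 < h by have := hub x (ex_intro _ nu bad); lra.
have [e [[e0 eh] improve]] := growth_le_improve h0.
have above nu' : growth_le nu' (h + e).
  by apply: NNPP => nu'e; have := hub (h + e) (ex_intro _ nu' nu'e); lra.
have [nu1 nu1bad] : exists nu1, ~ growth_le nu1 (h - e).
  apply: NNPP => none; suff : h <= h - e by lra.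
  apply: hlub => y [nu' nu'y]; apply: Rnot_lt_le => lt; apply: nu'y.
  by apply: growth_le_mono (Rlt_le _ _ lt) _; apply: NNPP => nu'e; apply: none; exists nu'.
have [nu' [nu1nu' gnu']] := good_often nu1.
apply: nu1bad; rewrite (_ : h - e = h - 2 * e + e); last by ring.
apply: (growth_le_lift Hfam d_gt0 (L := nu' - nu1)); [lra|lra|].
by rewrite subnKC //; apply: improve.
Qed.

End Bootstrap.

Section WordGrowth.
Variable d : nat.
Local Open Scope R_scope.

Fixpoint words_le (T : seq (tfun d)) n : seq (seq (tfun d)) :=
  if n is n'.+1 then [::] :: [seq s :: w | s <- T, w <- words_le T n'] else [:: [::]].

Lemma size_words_le T n : (size (words_le T n) <= (size T).+1 ^ n)%N.
Proof. by elim: n => [|n IH] //=; rewrite size_allpairs expnS; nia. Qed.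

Lemma In_words_le T n w : word_over T w -> (size w <= n)%N -> List.In w (words_le T n).
Proof.
elim: n w => [|n IH] [|s w] wT wn //=; [by left|by left|right].
by inversion wT; subst; apply: (In_allpairs cons) => //; apply: IH.
Qed.

Lemma word_ball_covered T n : covers (word_ball T n) (map (@prod_word d) (words_le T n)).
Proof. by move=> g [w [wT [wn <-]]]; apply: List.in_map; apply: In_words_le. Qed.

Definition word_growth (T : seq (tfun d)) n : nat :=
  epsilon (inhabits 0%N) (fun k => has_card (word_ball T n) k).

Lemma word_growth_card T n : has_card (word_ball T n) (word_growth T n).
Proof.
apply: (epsilon_spec (inhabits 0%N) (fun k => has_card (word_ball T n) k)).
by have [k [k_card _]] := covers_cardinal (@word_ball_covered T n); exists k.
Qed.

Lemma word_growth_le_size T n s : covers (word_ball T n) s -> (word_growth T n <= size s)%N.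
Proof. exact: has_card_le_size (word_growth_card T n). Qed.

Lemma word_growth_mono T : nondecreasing (word_growth T).
Proof.
move=> m n mn; have [r [_ [<- rP]]] := word_growth_card T n.
rewrite -size_length; apply: word_growth_le_size => g [w [wT [wm wg]]].
by apply/rP; exists w; split => //; split => //; apply: leq_trans mn.
Qed.

Lemma word_growth_lesssim_exp T : lesssim (fun n => INR (word_growth T n)) expn_R.
Proof.
exists (size T).+1; split => // n _.
have ball_size : (word_growth T n <= (size T).+1 ^ n)%N.
  apply: leq_trans (size_words_le T n); rewrite -(size_map (@prod_word d)).
  exact/word_growth_le_size/word_ball_covered.
apply: Rle_trans (INR_leq ball_size) _; rewrite INR_expn /expn_R INR_muln.
by apply: pow_le_exp; [apply: pos_INR|have := exp_ineq1_le (INR (size T).+1); lra].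
Qed.

Lemma word_ball_sub_ball (S : nat -> seq (tfun d)) (l : nat -> tfun d -> nat) nu n g :
  non_l1_expanding_similar_family S l ->
  word_ball (S nu) n g -> ball S l nu n g.
Proof.
move=> Hfam [w [wS [wn <-]]]; apply: ball_prod_word => //; apply: leq_trans wn.
elim: w wS {g} => //= s w IH /List.Forall_cons_iff [sS wS].
by rewrite /weight /= -/(weight _ w) -addn1 addnC leq_add ?IH ?(pseudolength_le1 Hfam sS).
Qed.

Lemma word_growth_rate (S : nat -> seq (tfun d)) (l : nat -> tfun d -> nat) nu x :
  non_l1_expanding_similar_family S l ->
  growth_le S l nu x -> exp_rate_le (fun n => INR (word_growth (S nu) n)) x.
Proof.
move=> Hfam [Ls [Lcov Lrate]]; apply: exp_rate_le_trans Lrate => n; apply: INR_leq.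
by apply: word_growth_le_size => g /(word_ball_sub_ball Hfam) /Lcov.
Qed.

End WordGrowth.

Theorem mainTheorem4 (d A : nat) (S : nat -> seq (tfun d))
  (l : nat -> tfun d -> nat) :
  (2 <= d)%N ->
  non_l1_expanding_similar_family S l ->
  (forall nu s, List.In s (S nu) -> incomp_inf S l nu s) ->
  (forall nu, (size (S nu) <= A)%N) ->
  (exists delta : nat -> nat,
     subexponential delta /\ ln_concave delta /\
     (forall N, exists nu, (N <= nu)%N /\
        forall n, card_le (fun g => incomp_inf S l nu g /\ sphere S l nu n g)
                          (delta n))) ->
  forall nu, subexponential_growth (S nu).
Proof.
move=> d2 Hfam _ size_S_le [delta [[delta_mono [delta_up not_exp]] [[delta_gt0 _] good_often]]] nu.
have d_gt0 : (0 < d)%N by apply: leq_trans d2.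
have delta_slow : ~ lesssim expn_R (fun n => INR (delta n)).
  by move=> fast; apply: not_exp; split.
exists (word_growth (S nu)); split; first exact: word_growth_card.
split; first exact: word_growth_mono.
split; first exact: word_growth_lesssim_exp.
case=> _; apply: not_lesssim_exp_of_exp_rate_le => x x0; apply: (word_growth_rate Hfam).
exact: (growth_le_all Hfam d_gt0 size_S_le delta_mono delta_gt0 good_often delta_slow nu x0).
Qed.
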